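(* Let $G=(V,E)$ be a simple graph with maximum degree $\Delta$, and let the algorithm WKP (described in the context) be run on an initial consistent link-coloring of $G$ with $\Delta$ colors. Then WKP either returns a proper $\Delta$-edge-coloring of $G$ (a consistent link-coloring with no variable edges) or returns a canonical configuration. Its running time is $O(|V||E|^2)$.
   Context: Each edge $e_{i,j}=v_iv_j$ of $G$ consists of two links $l_{i,j}$ (at $v_i$) and $l_{j,i}$ (at $v_j$). A configuration is a map $c$ assigning to each link a color from $C=\{c_1,\dots,c_\Delta\}$; write $c_{i,j}=c(l_{i,j})$ and the colored edge $\vec e_{i,j}=(c_{i,j},c_{j,i})$. It is a constant if $c_{i,j}=c_{j,i}$, a variable otherwise. A configuration is consistent if links at a common vertex have distinct colors, and proper if it is consistent with no variables (equivalently, a proper edge-coloring with $\Delta$ colors). For colors $\alpha\ne\beta$, an $(\alpha,\beta)$ path is a sequence of consecutive adjacent links all colored $\alpha$ or $\beta$; a maximal one is either an $(\alpha,\beta)$ cycle (closed) or an open path ending at the middle of an edge or at a vertex missing an $\alpha$- or $\beta$-colored link. A color exchange at a vertex $v_i$ swaps the colors of two links incident to $v_i$ (preserving consistency). A Kempe walk of an $(\alpha,\beta)$ variable along an $(\alpha,\beta)$ path is a sequence of color exchanges at successive interior vertices of the path: $(\alpha,\beta)\otimes(\alpha,\alpha)\Rightarrow(\alpha,\alpha)\circ(\beta,\alpha)$ (step forward), $(\alpha,\beta)\otimes(\alpha,\beta)\Rightarrow(\alpha,\alpha)\circ(\beta,\beta)$ (two variables eliminated), $(\alpha,\beta)\otimes(\alpha,\gamma)\Rightarrow(\alpha,\alpha)\circ(\beta,\gamma)$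 or, at a vertex with the corresponding link missing, $(\alpha,\beta)\Rightarrow(\alpha,\alpha)$ (one variable eliminated); here $(x,y)\otimes(z,w)\Rightarrow(x,z)\circ(y,w)$ denotes swapping the colors $y$ and $z$ of the two links meeting at the common vertex. Subroutine Variable-Walk($\vec e_{i,j}$) for a variable $\vec e_{i,j}=(\alpha,\beta)$: starting from one end $v_i$, follow the $(\alpha,\beta)$ path until (1) another variable is found, (2) it terminates at a vertex missing an $\alpha$ or $\beta$ link (or at the end of the maximal path), or (3) it returns to $v_j$, closing a cycle; in case (3) return false; otherwise perform the Kempe walk along the interior chain of this path (eliminating at least one variable) and return true. Algorithm WKP: (i) list all variables; (ii) if there are none, return the (proper) coloring; (iii) otherwise, for each variable in the list, call Variable-Walk; as soon as one call returns true, update the list and go to (ii); (iv) if all calls return false, return the current configuration. A canonical configuration is a consistent configuration in which no variable can be reduced by such a single-variable Kempe walk, i.e. Variable-Walk returns false for every variable (each remaining $(\alpha,\beta)$ variable lies on an $(\alpha,\beta)$ cycle containing no other variable). *)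

From mathcomp Require Import all_boot.

Set Implicit Arguments.
Unset Strict Implicit.
Unset Printing Implicit Defensive.

(* A configuration: c u v is the colour of the link l_{u,v} (the half of
   edge uv at u).  Values on non-links are
   irrelevant. *)
Definition config (T : Type) := T -> T -> nat.

Inductive outcome := OMissing | OFound | OCycle.

Section WKP.
Variables (T : finType) (adj : rel T).

Definition maxdeg : nat := \max_(v : T) #|[set w | adj v w]|.

Definition nedges : nat :=
  #|[set [set p.1; p.2] | p in [set q : T * T | adj q.1 q.2]]|.

Definition consistent (D : nat) (c : config T) : Prop :=
  (forall u v, adj u v -> c u v < D) /\
  (forall u v w, adj u v -> adj u w -> v != w -> c u v != c u w).

Definition is_variable (c : config T) (u v : T) : bool :=
  adj u v && (c u v != c v u).

Definition proper_coloring (D : nat) (c : config T) : Prop :=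
  consistent D c /\ (forall u v, adj u v -> c u v = c v u).

Definition upd (c : config T) (x y : T) (k : nat) : config T :=
  fun s t => if (s == x) && (t == y) then k else c s t.

(* colour exchange at x of the links l_{x,p} and l_{x,y}:
   (c p x, c x p) (x) (c x y, c y x) => (c p x, c x y) o (c x p, c y x),
   used with c x y = c p x. *)
Definition exch (c : config T) (p x y : T) : config T :=
  upd (upd c x p (c x y)) x y (c x p).

Definition other (a b k : nat) : nat := if k == a then b else a.

(* Following the (a,b) path (on the unmodified configuration c) which starts
   with the variable u-w (c u w = a, c w u = b) and proceeds from w.
   State: current vertex x and the colour k of the link to be taken at x.
   [trace c u w a b x k o n]: the path ends with outcome o after n edges:
   OMissing : x has no link coloured k (case (2));
   OFound   : the next edge x-y is another variable (case (1));
   OCycle   : the next edge is the starting variable u-w again, i.e. the path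
              closed a cycle back to it (case (3)). *)
Inductive trace (c : config T) (u w : T) (a b : nat) :
    T -> nat -> outcome -> nat -> Prop :=
| tr_missing x k :
    (forall y, adj x y -> c x y != k) -> trace c u w a b x k OMissing 0
| tr_cycle x k y :
    adj x y -> c x y = k -> x = u -> y = w -> trace c u w a b x k OCycle 1
| tr_found x k y :
    adj x y -> c x y = k -> (x, y) != (u, w) -> c y x != k ->
    trace c u w a b x k OFound 1
| tr_cont x k y o n :
    adj x y -> c x y = k -> (x, y) != (u, w) -> c y x = k ->
    trace c u w a b y (other a b k) o n -> trace c u w a b x k o n.+1.

Definition walk_trace (c : config T) (u w : T) (o : outcome) (n : nat) :=
  trace c u w (c u w) (c w u) w (c u w) o n.

(* The Kempe walk of the variable p-x (currently at x), as a sequence of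
   colour exchanges; [kempe c p x c' n]: it ends in c' after n exchanges. *)
Inductive kempe : config T -> T -> T -> config T -> nat -> Prop :=
| kw_missing c p x :
    (forall y, adj x y -> y != p -> c x y != c p x) ->
    kempe c p x (upd c x p (c p x)) 1
| kw_stop c p x y :
    adj x y -> y != p -> c x y = c p x -> c y x != c p x ->
    kempe c p x (exch c p x y) 1
| kw_cont c p x y c' n :
    adj x y -> y != p -> c x y = c p x -> c y x = c p x ->
    kempe (exch c p x y) x y c' n -> kempe c p x c' n.+1.

(* Variable-Walk on the variable u-w, started from the end w.
   Result None = "false" (configuration unchanged), Some c' = "true" with
   the new configuration c'.  The natural number is the cost (number of
   elementary steps: edges followed plus colour exchanges plus one). *)
Inductive vwalk (c : config T) (u w : T) : option (config T) -> nat -> Prop :=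
| vw_false n : walk_trace c u w OCycle n -> vwalk c u w None n.+1
| vw_true o n c' m :
    o <> OCycle -> walk_trace c u w o n -> kempe c u w c' m ->
    vwalk c u w (Some c') (n + m).+1.

Definition canonical (D : nat) (c : config T) : Prop :=
  consistent D c /\
  (forall u w, is_variable c u w -> exists n, walk_trace c u w OCycle n).

(* step (i): a list of all variables, each listed once, each with a chosen
   starting end (an oriented pair (v_j, v_i): the walk starts from v_i). *)
Definition var_list (c : config T) (l : seq (T * T)) : Prop :=
  [/\ (forall p, p \in l -> is_variable c p.1 p.2),
      (forall u v, is_variable c u v -> (u, v) \in l \/ (v, u) \in l)
    & uniq [seq [set p.1; p.2] | p <- l]].

Inductive process (c : config T) :
    seq (T * T) -> option (config T) -> nat -> Prop :=
| pr_nil : process c [::] None 0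
| pr_true u w l c' k :
    vwalk c u w (Some c') k -> process c ((u, w) :: l) (Some c') k
| pr_false u w l r k k' :
    vwalk c u w None k -> process c l r k' ->
    process c ((u, w) :: l) (r) (k + k').

Definition wkp_round (c c' : config T) (k : nat) : Prop :=
  exists2 l, var_list c l &
    exists k', process c l (Some c') k' /\ k = size l + k'.

(* the final round: no call returns true (including the case of no
   variables at all); WKP returns the current configuration *)
Definition wkp_final (c : config T) (k : nat) : Prop :=
  exists2 l, var_list c l &
    exists k', process c l None k' /\ k = size l + k'.

(* partial executions of WKP (any choice of lists/orders/ends) *)
Inductive wkp_exec : config T -> config T -> nat -> Prop :=
| ex_refl c : wkp_exec c c 0
| ex_step c c1 c2 k k' :
    wkp_round c c1 k -> wkp_exec c1 c2 k' -> wkp_exec c c2 (k + k').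

Definition wkp_run (c c' : config T) (k : nat) : Prop :=
  exists k1 k2, [/\ wkp_exec c c' k1, wkp_final c' k2 & k = k1 + k2].

End WKP.

From mathcomp Require Import all_boot perm zify.

Set Implicit Arguments.
Unset Strict Implicit.
Unset Printing Implicit Defensive.

(* Along the (a,b) path of a variable u-w every vertex is entered at most once:
   the visited vertices stay closed under (a,b) links, both in the original
   configuration and in the one modified by the Kempe walk, except for the
   frontier link and the starting link (chain_inv).  So the path and the Kempe
   walk along it take at most |V| steps each.  A Kempe walk keeps the
   configuration consistent, removes the variable u-w and creates no other one,
   so the set of variable edges shrinks at every successful round: at most |E|
   rounds of at most |E| calls each, whence termination and O(|V||E|^2).  When
   no call succeeds, every variable lies on an (a,b) cycle traced from its
   listed end, hence also from the other end (read the cycle backwards), which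
   is canonicity. *)

Lemma adj_neq (T : eqType) (adj : rel T) : irreflexive adj -> forall x y, adj x y -> x != y.
Proof. by move=> irrA x y; apply: contraTneq => ->; rewrite irrA. Qed.

Lemma other_in a b k : (other a b k == a) || (other a b k == b).
Proof. by rewrite /other; case: ifP; rewrite eqxx ?orbT. Qed.

Section Other.
Variables (a b k : nat).
Hypotheses (ab : a != b) (kab : (k == a) || (k == b)).

Let ba : (b == a) = false. Proof. by rewrite eq_sym (negbTE ab). Qed.

Lemma otherK : other a b (other a b k) = k.
Proof. by rewrite /other; case/orP: kab => /eqP->; rewrite ?(eqxx, ba, negbTE ab). Qed.

Lemma other_neq : other a b k != k.
Proof. by rewrite /other; case/orP: kab => /eqP->; rewrite ?(eqxx, ba, negbTE ab). Qed.

Lemma otherC : other b a k = other a b k.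
Proof. by rewrite /other; case/orP: kab => /eqP->; rewrite ?(eqxx, ba, negbTE ab). Qed.

Lemma other_cases j : (j == a) || (j == b) -> (j == k) || (j == other a b k).
Proof. by rewrite /other; case/orP: kab => /eqP->; rewrite ?(eqxx, ba) // orbC. Qed.

End Other.

Section KempeChain.
Variables (T : finType) (adj : rel T) (c : config T).
Hypotheses (symA : symmetric adj) (irrA : irreflexive adj).
Hypothesis c_inj : forall x y z, adj x y -> adj x z -> c x y = c x z -> y = z.
Variables (u w : T) (a b : nat).
Hypotheses (uw : adj u w) (cuw : c u w = a) (cwu : c w u = b) (ab : a != b).

Lemma exchE (d : config T) p x y s t : exch d p x y s t =
  if (s == x) && (t == y) then d x p else if (s == x) && (t == p) then d x y else d s t.
Proof. by []. Qed.

Definition ab_closed (e : config T) (P : {set T}) (p x : T) : Prop :=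
  forall v t, v \in P -> adj v t -> (e v t == a) || (e v t == b) ->
    [\/ t \in P, t = x /\ v = p | v = w /\ t = u].

(* The walk has visited P and reached the fresh vertex x through p; d is c after
   the colour exchanges at the vertices of P, which have pushed the variable to
   the link p-x, and k is the colour of the link to follow next from x. *)
Record chain_inv (d : config T) (P : {set T}) (p x : T) (k : nat) : Prop := {
  inv_colour : (k == a) || (k == b);
  inv_fresh : x \notin P;
  inv_adj : adj x p;
  inv_prev : p \in P \/ (p = u /\ x = w);
  inv_back : c x p = other a b k;
  inv_front : d p x = k;
  inv_off : forall s t, s \notin P -> d s t = c s t;
  inv_closed_c : ab_closed c P p x;
  inv_closed_d : ab_closed d P p x }.

Lemma chain_inv_start : chain_inv c set0 u w a.
Proof.
split; try by move=> v t; rewrite in_set0.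
- by rewrite eqxx.
- by rewrite in_set0.
- by rewrite symA.
- by right.
- by rewrite cwu /other eqxx.
- by [].
Qed.

Lemma chain_next_neq_prev d P p x k y : chain_inv d P p x k -> c x y = k -> y != p.
Proof.
move=> I cxy; apply: contra_eqN cxy => /eqP->.
by rewrite (inv_back I) (other_neq ab (inv_colour I)).
Qed.

Lemma chain_next_fresh e d P p x k y : chain_inv d P p x k -> ab_closed e P p x ->
  adj x y -> c x y = k -> e y x = k -> (x, y) != (u, w) -> y \notin P.
Proof.
move=> I cl xy cxy eyx nuw; apply/negP=> yP.
have := cl y x yP; rewrite symA eyx (inv_colour I) => /(_ xy isT).
case=> [xP|[_ yp]|[yw xu]].
- by move: (inv_fresh I); rewrite xP.
- by move: (chain_next_neq_prev I cxy); rewrite yp eqxx.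
- by rewrite yw xu eqxx in nuw.
Qed.

Lemma chain_links_at d P p x k y : chain_inv d P p x k -> adj x y -> c x y = k ->
  forall t, adj x t -> (c x t == a) || (c x t == b) ->
  [\/ t \in x |: P, t = y /\ x = x | x = w /\ t = u].
Proof.
move=> I xy cxy t xt /(other_cases ab (inv_colour I)) /orP[] /eqP ct.
  by constructor 2; split => //; apply: c_inj xt xy _; rewrite ct cxy.
have -> : t = p by apply: c_inj xt (inv_adj I) _; rewrite ct (inv_back I).
case: (inv_prev I) => [pP|[pu xw]]; last by constructor 3; split.
by constructor 1; rewrite in_setU1 pP orbT.
Qed.

Lemma ab_closed_widen (P : {set T}) p x y v t :
  [\/ t \in P, t = x /\ v = p | v = w /\ t = u] ->
  [\/ t \in x |: P, t = y /\ v = x | v = w /\ t = u].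
Proof.
case=> [tP|[-> _]|wu]; last by constructor 3.
- by constructor 1; rewrite in_setU1 tP orbT.
- by constructor 1; rewrite setU11.
Qed.

Lemma chain_inv_step d P p x k y : chain_inv d P p x k ->
  adj x y -> c x y = k -> c y x = k -> (x, y) != (u, w) ->
  chain_inv (exch d p x y) (x |: P) x y (other a b k).
Proof.
move=> I xy cxy cyx nuw.
have yx : y != x by rewrite eq_sym (adj_neq irrA xy).
split.
- exact: other_in.
- by rewrite in_setU1 negb_or yx (chain_next_fresh I (inv_closed_c I)).
- by rewrite symA.
- by left; rewrite setU11.
- by rewrite cyx otherK // (inv_colour I).
- by rewrite exchE !eqxx /= (inv_off I _ (inv_fresh I)) (inv_back I).
- move=> s t; rewrite in_setU1 negb_or => /andP[sx sP].
  by rewrite exchE (negbTE sx) /= (inv_off I).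
- move=> v t; rewrite in_setU1 => /orP[/eqP->|vP] vt.
    exact: chain_links_at I xy cxy t vt.
  by move/(inv_closed_c I vP vt); apply: ab_closed_widen.
- move=> v t; rewrite in_setU1 => /orP[/eqP->|vP] vt.
    rewrite exchE eqxx /=.
    have [->|ty] := eqVneq t y; first by constructor 2.
    have [->|tp] := eqVneq t p.
      case: (inv_prev I) => [pP|[pu xw]]; last by constructor 3; split.
      by constructor 1; rewrite in_setU1 pP orbT.
    rewrite (inv_off I _ (inv_fresh I)); exact: chain_links_at I xy cxy t vt.
  have vx : v != x by apply: contraNneq (inv_fresh I) => <-.
  rewrite exchE (negbTE vx) /=.
  by move/(inv_closed_d I vP vt); apply: ab_closed_widen.
Qed.

Lemma cardsCU1 (P : {set T}) x : x \notin P -> #|~: (x |: P)|.+1 = #|~: P|.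
Proof.
move=> xP; have := cardsC (x |: P); have := cardsC P.
rewrite cardsU1 xP; lia.
Qed.

Lemma trace_len_le x k o n : trace adj c u w a b x k o n ->
  forall d P p, chain_inv d P p x k -> n <= #|~: P|.
Proof.
elim=> {x k o n} [x k _ | x k y _ _ _ _ | x k y _ _ _ _
  | x k y o n xy cxy nuw cyx _ IH] d P p I; rewrite -(cardsCU1 (inv_fresh I)) //.
by rewrite ltnS (IH _ _ _ (chain_inv_step I xy cxy cyx nuw)).
Qed.

Lemma trace_exists d P p x k : chain_inv d P p x k -> exists o n, trace adj c u w a b x k o n.
Proof.
have [m] := ubnP #|~: P|; elim: m d P p x k => // m IH d P p x k hm I.
case: (pickP (fun y => adj x y && (c x y == k))) => [y /andP[xy /eqP cxy] | none].
- have [[xu yw] | nuw] := eqVneq (x, y) (u, w).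
    by exists OCycle, 1; apply: tr_cycle xy cxy xu yw.
  have [cyx | ncyx] := eqVneq (c y x) k; last first.
    by exists OFound, 1; apply: tr_found xy cxy nuw ncyx.
  have hm' : #|~: (x |: P)| < m by rewrite -ltnS (cardsCU1 (inv_fresh I)).
  have [o [n tr]] := IH _ _ _ _ _ hm' (chain_inv_step I xy cxy cyx nuw).
  by exists o, n.+1; apply: tr_cont tr.
- exists OMissing, 0; apply: tr_missing => y xy.
  by apply: contraFneq (none y) => <-; rewrite xy eqxx.
Qed.

Lemma trace_cont_inv x k o n y : trace adj c u w a b x k o n ->
  adj x y -> c x y = k -> c y x = k -> (x, y) != (u, w) ->
  exists n', n = n'.+1 /\ trace adj c u w a b y (other a b k) o n'.
Proof.
case=> {x k o n} [x k H | x k y' xy' cxy' xu yw | x k y' xy' cxy' _ ncyx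
  | x k y' o n xy' cxy' _ _ tr] xy cxy cyx nuw.
- by move: (H y xy); rewrite cxy eqxx.
all: have e : y = y' by apply: c_inj xy xy' _; rewrite cxy cxy'.
- by move: nuw; rewrite e xu yw eqxx.
- by move: ncyx; rewrite -e cyx eqxx.
- by exists n; rewrite e.
Qed.

Lemma trace_start_cycle x k o n : trace adj c u w a b x k o n ->
  c u w = k -> x = u -> o = OCycle.
Proof.
case=> {x k o n} [x k H | // | x k y xy cxy nuw _ | x k y o n xy cxy nuw _ _] cuwk xu;
  subst x.
- by move: (H w uw); rewrite cuwk eqxx.
all: have e : y = w by apply: c_inj xy uw _; rewrite cxy cuwk.
all: by move: nuw; rewrite e eqxx.
Qed.

Lemma kempe_exists x k o n : trace adj c u w a b x k o n -> o <> OCycle ->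
  forall d P p, chain_inv d P p x k -> exists d' m, kempe adj d p x d' m.
Proof.
elim=> {x k o n} [x k H | // | x k y xy cxy nuw ncyx
  | x k y o n xy cxy nuw cyx _ IH] no d P p I.
- exists (upd d x p (d p x)), 1; apply: kw_missing => y xy _.
  by rewrite (inv_off I _ (inv_fresh I)) (inv_front I) H.
- have dxy : d x y = d p x by rewrite (inv_off I _ (inv_fresh I)) (inv_front I).
  exists (exch d p x y), 1; apply: kw_stop (chain_next_neq_prev I cxy) dxy _ => //.
  apply: contra_neq ncyx; rewrite (inv_front I) => dyx.
  by rewrite -(inv_off I _ (chain_next_fresh I (inv_closed_d I) xy cxy dyx nuw)).
- have [d' [m K]] := IH no _ _ _ (chain_inv_step I xy cxy cyx nuw).
  exists d', m.+1; apply: kw_cont K => //; first exact: chain_next_neq_prev I cxy.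
    by rewrite (inv_off I _ (inv_fresh I)) (inv_front I).
  by rewrite (inv_off I _ (chain_next_fresh I (inv_closed_c I) xy cxy cyx nuw)) (inv_front I).
Qed.

Lemma kempe_len_le d p x d' m : kempe adj d p x d' m ->
  forall P k o n, trace adj c u w a b x k o n -> o <> OCycle ->
  chain_inv d P p x k -> m <= #|~: P|.
Proof.
elim=> {d p x d' m} [d p x _ | d p x y _ _ _ _ | d p x y d' m xy _ dxy dyx _ IH]
  P k o n tr no I; rewrite -(cardsCU1 (inv_fresh I)) //.
have cxy : c x y = k by rewrite -(inv_off I _ (inv_fresh I)) dxy (inv_front I).
have nuw : (x, y) != (u, w).
  rewrite xpair_eqE; apply/negP => /andP[/eqP xu /eqP yw].
  by apply: no; apply: (trace_start_cycle tr _ xu); rewrite -xu -yw.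
have dyx' : d y x = k by rewrite dyx (inv_front I).
have cyx : c y x = k.
  by rewrite -(inv_off I _ (chain_next_fresh I (inv_closed_d I) xy cxy dyx' nuw)).
have [n' [_ tr']] := trace_cont_inv tr xy cxy cyx nuw.
by rewrite ltnS (IH _ _ _ _ tr' no (chain_inv_step I xy cxy cyx nuw)).
Qed.

End KempeChain.

Section Reverse.
Variables (T : finType) (adj : rel T) (c : config T).
Hypothesis symA : symmetric adj.
Variables (u w : T).
Hypotheses (uw : adj u w) (ab : c u w != c w u).

Let a := c u w.
Let b := c w u.

(* Read backwards, an (a,b) cycle traced from u is one traced from w: the part
   already followed from u is accumulated, reversed, as a trace from x. *)
Lemma cycle_trace_rev x k o n : trace adj c w u b a x k o n -> o = OCycle ->
  (k == a) || (k == b) ->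
  (exists m, trace adj c u w a b x (other a b k) OCycle m) ->
  exists m, walk_trace adj c u w OCycle m.
Proof.
elim=> {x k o n} [// | x k y _ cxy xw yu | // | x k y o n xy cxy nuw cyx _ IH]
  eo kab [m tr].
- by exists m; move: tr; rewrite /other -cxy xw yu eq_sym (negbTE ab).
- have ba : b != a by rewrite eq_sym.
  apply: IH => //; first by rewrite otherC // other_in.
  exists m.+1; rewrite otherC // ?other_in // otherK //; last by rewrite orbC.
  apply: tr_cont tr => //; first by rewrite symA.
  by apply: contra nuw => /eqP[-> ->].
Qed.

Lemma walk_cycle_sym n : walk_trace adj c w u OCycle n ->
  exists m, walk_trace adj c u w OCycle m.
Proof.
move=> tr; apply: (cycle_trace_rev tr) => //; first by rewrite eqxx orbT.
exists 1; rewrite /other eq_sym (negbTE ab).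
exact: tr_cycle uw erefl erefl erefl.
Qed.

End Reverse.

Section Configurations.
Variables (T : finType) (adj : rel T).
Hypotheses (symA : symmetric adj) (irrA : irreflexive adj).
Implicit Types (c d : config T) (D : nat).

Lemma consistent_inj D c : consistent adj D c ->
  forall x y z, adj x y -> adj x z -> c x y = c x z -> y = z.
Proof.
move=> [_ H] x y z xy xz e; have [//|yz] := eqVneq y z.
by move: (H _ _ _ xy xz yz); rewrite e eqxx.
Qed.

Section VariableWalk.
Variables (D : nat) (c : config T) (u w : T).
Hypotheses (C : consistent adj D c) (V : is_variable adj c u w).

Let uw : adj u w. Proof. by case/andP: V. Qed.
Let ab : c u w != c w u. Proof. by case/andP: V. Qed.
Let start := @chain_inv_start _ _ c symA _ _ _ _ uw erefl erefl.
Let c_inj := consistent_inj C.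

Lemma walk_exists : exists o n, walk_trace adj c u w o n.
Proof. exact (trace_exists symA irrA c_inj uw erefl erefl ab start). Qed.

Lemma walk_len_le o n : walk_trace adj c u w o n -> n <= #|T|.
Proof.
move=> tr.
by have := trace_len_le symA irrA c_inj uw erefl erefl ab tr start; rewrite setC0 cardsT.
Qed.

Lemma walk_kempe_exists o n : walk_trace adj c u w o n -> o <> OCycle ->
  exists c' m, kempe adj c u w c' m.
Proof. move=> tr no; exact (kempe_exists symA irrA c_inj ab tr no start). Qed.

Lemma walk_kempe_len_le o n c' m : walk_trace adj c u w o n -> o <> OCycle ->
  kempe adj c u w c' m -> m <= #|T|.
Proof.
move=> tr no K.
by have := kempe_len_le symA irrA c_inj uw erefl erefl ab K tr no start; rewrite setC0 cardsT.
Qed.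

End VariableWalk.

Lemma exch_at (d : config T) p x y t : exch d p x y x t = d x (tperm y p t).
Proof.
rewrite exchE eqxx /=.
by case: tpermP => [->|->|/eqP/negbTE-> /eqP/negbTE->]; rewrite ?eqxx //; case: eqP => [->|].
Qed.

Lemma exch_off (d : config T) p x y s t : s != x -> exch d p x y s t = d s t.
Proof. by move=> sx; rewrite exchE (negbTE sx). Qed.

Lemma consistent_exch D d p x y : consistent adj D d -> adj x p -> adj x y ->
  consistent adj D (exch d p x y).
Proof.
move=> [Dd Cd] xp xy.
have xt t : adj x t -> adj x (tperm y p t) by case: tpermP => // ->.
split=> [s t | s v t].
  have [-> xt'|sx st] := eqVneq s x; last by rewrite exch_off //; apply: Dd.
  by rewrite exch_at; apply/Dd/xt.
have [-> xv xt' vt|sx sv st vt] := eqVneq s x; last by rewrite !exch_off //; apply: Cd.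
by rewrite !exch_at; apply: Cd; rewrite ?xt // (inj_eq perm_inj).
Qed.

Lemma consistent_upd D d p x : consistent adj D d -> adj p x ->
  (forall y, adj x y -> y != p -> d x y != d p x) -> consistent adj D (upd d x p (d p x)).
Proof.
move=> [Dd Cd] px miss; split=> [s t st | s v t]; rewrite /upd.
  by case: ifP => _; apply: Dd; rewrite // symA.
have [-> | sx] := eqVneq s x; last exact: Cd.
have [-> _ xt pt | vp] := eqVneq v p; rewrite ?eqxx /=.
  by rewrite [t == p]eq_sym (negbTE pt) eq_sym miss // eq_sym.
case: (eqVneq t p) => [-> xv _ _ | tp] /=; [exact: miss | exact: Cd].
Qed.

Lemma exch_variable d p x y : adj x y -> is_variable adj d p x -> d y x = d p x ->
  is_variable adj (exch d p x y) x y.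
Proof.
move=> xy /andP[_ dpx] dyx.
have yx : y != x by rewrite eq_sym (adj_neq irrA xy).
by rewrite /is_variable xy exch_at exch_off // tpermL dyx eq_sym.
Qed.

Lemma kempe_consistent D d p x d' m : kempe adj d p x d' m -> consistent adj D d ->
  is_variable adj d p x -> consistent adj D d'.
Proof.
elim=> {d p x d' m} [d p x miss | d p x y xy _ _ _ | d p x y d' m xy _ _ dyx _ IH]
  C V; have px : adj x p by rewrite symA; case/andP: V.
- by apply: consistent_upd miss; rewrite // symA.
- exact: consistent_exch.
- exact: IH (consistent_exch _ _ _) (exch_variable _ _ _).
Qed.

Definition var_edges c : {set {set T}} :=
  [set [set q.1; q.2] | q in [set q : T * T | is_variable adj c q.1 q.2]].

Lemma var_edgesP c e :
  reflect (exists q1 q2, e = [set q1; q2] /\ is_variable adj c q1 q2) (e \in var_edges c).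
Proof.
apply: (iffP imsetP) => [[[q1 q2]]|[q1 [q2 [-> V]]]]; last by exists (q1, q2); rewrite ?inE.
by rewrite inE => V ->; exists q1, q2.
Qed.

Lemma card_var_edges c : #|var_edges c| <= nedges adj.
Proof. by apply/subset_leq_card/imsetS/subsetP => q; rewrite !inE => /andP[]. Qed.

Lemma eq_set2 (p x q1 q2 : T) : p != x -> [set q1; q2] = [set p; x] ->
  (q1 = p /\ q2 = x) \/ (q1 = x /\ q2 = p).
Proof.
move=> px e.
have := set21 p x; have := set22 p x; rewrite -e !in_set2.
by case/orP=> /eqP xq; case/orP=> /eqP pq; subst; auto; rewrite eqxx in px.
Qed.

Lemma var_edges_upd d p x e : adj p x ->
  e \in var_edges (upd d x p (d p x)) -> e \in var_edges d :\ [set p; x].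
Proof.
move=> px /var_edgesP [q1 [q2 [-> /andP[q12 v]]]].
have pxn := adj_neq irrA px.
have notpx : [set q1; q2] != [set p; x].
  apply/eqP => /(eq_set2 pxn) [[e1 e2]|[e1 e2]]; subst;
  by move: v; rewrite /upd !eqxx ?(negbTE pxn) /= ?eqxx.
rewrite in_setD1 notpx; apply/var_edgesP; exists q1, q2; split => //.
rewrite /is_variable q12; move: v; rewrite /upd.
case: ifP => [/andP[/eqP e1 /eqP e2]|_]; first by rewrite e1 e2 setUC eqxx in notpx.
by case: ifP => [/andP[/eqP e1 /eqP e2]|_] //; rewrite e1 e2 eqxx in notpx.
Qed.

Lemma var_edges_exch d p x y e : adj x y -> adj p x -> y != p -> d x y = d p x ->
  e \in var_edges (exch d p x y) -> e \in [set x; y] |: (var_edges d :\ [set p; x]).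
Proof.
move=> xy px yp dxy /var_edgesP [q1 [q2 [-> /andP[q12 v]]]].
have pxn := adj_neq irrA px.
have notpx : [set q1; q2] != [set p; x].
  apply/eqP => /(eq_set2 pxn) [[e1 e2]|[e1 e2]]; subst;
  by move: v; rewrite !exchE eqxx (negbTE pxn) [p == y]eq_sym (negbTE yp) /= eqxx /= dxy eqxx.
rewrite in_setU1 in_setD1 notpx /=.
have [/andP[/eqP e1 /orP[]/eqP e2]|N1] := boolP ((q1 == x) && ((q2 == y) || (q2 == p))).
- by rewrite e1 e2 eqxx.
- by rewrite e1 e2 setUC eqxx in notpx.
have [/andP[/eqP e1 /orP[]/eqP e2]|N2] := boolP ((q2 == x) && ((q1 == y) || (q1 == p))).
- by rewrite e1 e2 setUC eqxx.
- by rewrite e1 e2 eqxx in notpx.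
have unch s t : ~~ ((s == x) && ((t == y) || (t == p))) -> exch d p x y s t = d s t.
  by rewrite exchE; case: (s == x) => //=; case: (t == y) => //=; case: (t == p).
apply/orP; right; apply/var_edgesP; exists q1, q2; split => //.
by rewrite /is_variable q12 -(unch _ _ N1) -(unch _ _ N2).
Qed.

Lemma kempe_var_edges d p x d' m : kempe adj d p x d' m -> is_variable adj d p x ->
  var_edges d' \subset var_edges d :\ [set p; x].
Proof.
elim=> {d p x d' m} [d p x _ | d p x y xy yp dxy dyx | d p x y d' m xy yp dxy dyx _ IH]
  V; have px : adj p x by case/andP: V.
all: have pxn := adj_neq irrA px.
- by apply/subsetP => e; apply: var_edges_upd.
- apply/subsetP => e /(var_edges_exch xy px yp dxy); rewrite in_setU1.
  case/orP=> [/eqP->|] //; rewrite in_setD1; apply/andP; split.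
    apply/eqP => /(eq_set2 pxn) [[xp _]|[_ yp']]; last by rewrite yp' eqxx in yp.
    by rewrite xp eqxx in pxn.
  by apply/var_edgesP; exists x, y; rewrite /is_variable xy dxy eq_sym.
- apply/subsetP => e /(subsetP (IH (exch_variable xy V dyx))).
  rewrite in_setD1 => /andP[exy /(var_edges_exch xy px yp dxy)].
  by rewrite in_setU1 (negbTE exy).
Qed.

Lemma kempe_card_var_edges d p x d' m : kempe adj d p x d' m -> is_variable adj d p x ->
  #|var_edges d'| < #|var_edges d|.
Proof.
move=> K V; have pxV : [set p; x] \in var_edges d by apply/var_edgesP; exists p, x.
rewrite [#|var_edges d|](cardsD1 [set p; x]) pxV add1n ltnS.
exact: subset_leq_card (kempe_var_edges K V).
Qed.

Let vwalk_max := (#|T| + #|T|).+1.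

Lemma vwalk_kempe c u w c' k : vwalk adj c u w (Some c') k -> exists m, kempe adj c u w c' m.
Proof. by move H: (Some c') => r V; case: V H => // o n c1 m _ _ K [->]; exists m. Qed.

Lemma vwalk_cycle c u w k : vwalk adj c u w None k -> exists n, walk_trace adj c u w OCycle n.
Proof. by move H: None => r V; case: V H => // n tr _; exists n. Qed.

Lemma vwalk_cost_le D c u w r k : consistent adj D c -> is_variable adj c u w ->
  vwalk adj c u w r k -> k <= vwalk_max.
Proof.
move=> C V [n tr | o n c' m no tr K]; have := walk_len_le C V tr; rewrite /vwalk_max.
  lia.
by have := walk_kempe_len_le C V tr no K; lia.
Qed.

Section Process.
Variables (D : nat) (c : config T).
Hypothesis C : consistent adj D c.

Lemma process_cost_le l r k : (forall q, q \in l -> is_variable adj c q.1 q.2) ->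
  process adj c l r k -> k <= size l * vwalk_max.
Proof.
move=> Vl P; elim: P Vl => {l r k} [|u w l c' k V|u w l r k k' V _ IH] Vl //=.
  by rewrite mulSn (leq_trans (vwalk_cost_le C (Vl _ (mem_head _ _)) V)) ?leq_addr.
rewrite mulSn leq_add ?(vwalk_cost_le C (Vl _ (mem_head _ _)) V) //.
by apply: IH => q ql; apply: Vl; rewrite in_cons ql orbT.
Qed.

Lemma process_exists l : (forall q, q \in l -> is_variable adj c q.1 q.2) ->
  exists r k, process adj c l r k.
Proof.
elim: l => [|[u w] l IH] Vl; first by exists None, 0; constructor.
have Vuw := Vl _ (mem_head _ _).
have [o [n tr]] := walk_exists C Vuw.
have [eo | no] : o = OCycle \/ o <> OCycle by case: (o); [right | right | left].
  subst o; have [r [k P]] : exists r k, process adj c l r k.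
    by apply: IH => q ql; apply: Vl; rewrite in_cons ql orbT.
  by exists r, (n.+1 + k); apply: pr_false P; apply: vw_false tr.
have [c' [m K]] := walk_kempe_exists C Vuw tr no.
by exists (Some c'), (n + m).+1; apply: pr_true; apply: vw_true no tr K.
Qed.

End Process.

Lemma process_kempe c l c' k : process adj c l (Some c') k ->
  exists u w m, (u, w) \in l /\ kempe adj c u w c' m.
Proof.
move H: (Some c') => r P; elim: P H => {l r k} [|u w l c1 k V|u w l r k k' _ _ IH] //.
  by case=> ->; have [m K] := vwalk_kempe V; exists u, w, m; rewrite mem_head.
by move/IH => [u' [w' [m [ul K]]]]; exists u', w', m; rewrite in_cons ul orbT.
Qed.

Lemma process_cycles c l k : process adj c l None k ->
  forall q, q \in l -> exists n, walk_trace adj c q.1 q.2 OCycle n.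
Proof.
move H: None => r P; elim: P H => {l r k} [|u w l c' k _|u w l r k k' V _ IH] // e q.
by rewrite in_cons => /orP[/eqP -> | ql]; [exact: vwalk_cycle V | exact: IH].
Qed.

Definition var_rep c (e : {set T}) :=
  [pick q : T * T | is_variable adj c q.1 q.2 && ([set q.1; q.2] == e)].

Lemma var_repP c e q : var_rep c e = Some q ->
  is_variable adj c q.1 q.2 /\ [set q.1; q.2] = e.
Proof. by rewrite /var_rep; case: pickP => [q' /andP[V /eqP E] [<-]|]. Qed.

Lemma var_rep_some c e : e \in var_edges c -> exists q, var_rep c e = Some q.
Proof.
case/var_edgesP => q1 [q2 [-> V]]; rewrite /var_rep; case: pickP => [q _|none].
  by exists q.
by have := none (q1, q2); rewrite /= V eqxx.
Qed.

Lemma map_var_rep c (s : seq {set T}) : {subset s <= var_edges c} ->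
  [seq [set q.1; q.2] | q <- pmap (var_rep c) s] = s.
Proof.
elim: s => [|e s IH] //= sV.
have [q req] := var_rep_some (sV _ (mem_head _ _)).
by rewrite req /= (var_repP req).2 IH // => e' es; apply: sV; rewrite in_cons es orbT.
Qed.

Lemma var_list_exists c : exists l, var_list adj c l.
Proof.
exists (pmap (var_rep c) (enum (var_edges c))); split.
- by move=> q; rewrite mem_pmap => /mapP [e _ /esym /var_repP []].
- move=> u v V.
  have uv : u != v by case/andP: V => /(adj_neq irrA).
  have [[q1 q2] req] : exists q, var_rep c [set u; v] = Some q.
    by apply: var_rep_some; apply/var_edgesP; exists u, v.
  have ql : (q1, q2) \in pmap (var_rep c) (enum (var_edges c)).
    by rewrite mem_pmap -req map_f // mem_enum; apply/var_edgesP; exists u, v.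
  have [_ /= /(eq_set2 uv) [[e1 e2]|[e1 e2]]] := var_repP req.
    by left; rewrite -e1 -e2.
  by right; rewrite -e1 -e2.
- by rewrite map_var_rep ?enum_uniq // => e; rewrite mem_enum.
Qed.

Lemma size_var_list c l : var_list adj c l -> size l <= nedges adj.
Proof.
case=> Vl _ ul; rewrite -(size_map (fun q => [set q.1; q.2])) /nedges cardE.
apply: uniq_leq_size => // e /mapP [q ql ->]; rewrite mem_enum.
by apply: imset_f; rewrite inE; case/andP: (Vl _ ql).
Qed.

Lemma var_list_cost_le D c l r k : consistent adj D c -> var_list adj c l ->
  process adj c l r k -> size l + k <= nedges adj * vwalk_max.+1.
Proof.
move=> C L P; have [Vl _ _] := L.
rewrite mulnS leq_add ?(size_var_list L) //.
exact: leq_trans (process_cost_le C Vl P) (leq_mul (size_var_list L) (leqnn _)).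
Qed.

Lemma wkp_round_spec D c c1 k : consistent adj D c -> wkp_round adj c c1 k ->
  [/\ consistent adj D c1, #|var_edges c1| < #|var_edges c|
    & k <= nedges adj * vwalk_max.+1].
Proof.
move=> C [l L [k' [P ->]]]; have [Vl _ _] := L.
have [u [w [m [ul K]]]] := process_kempe P.
have V : is_variable adj c u w := Vl _ ul.
split; [exact: kempe_consistent K C V | exact: kempe_card_var_edges K V
       | exact: var_list_cost_le C L P].
Qed.

Lemma wkp_final_cost_le D c k : consistent adj D c -> wkp_final adj c k ->
  k <= nedges adj * vwalk_max.+1.
Proof. by move=> C [l L [k' [P ->]]]; apply: var_list_cost_le C L P. Qed.

Lemma wkp_final_canonical D c k : consistent adj D c -> wkp_final adj c k -> canonical adj D c.
Proof.
move=> C [l [_ Vl _] [k' [P _]]]; split => // u v V.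
case: (Vl _ _ V) => ql; have [n tr] := process_cycles P ql; first by exists n.
by have [uv ab] := andP V; exact (walk_cycle_sym symA uv ab tr).
Qed.

Lemma wkp_exec_spec D c c' k : consistent adj D c -> wkp_exec adj c c' k ->
  consistent adj D c' /\ k <= #|var_edges c| * (nedges adj * vwalk_max.+1).
Proof.
move=> C E; elim: E C => {c c' k} [c|c c1 c2 k k' R _ IH] C; first by split.
have [C1 lt kR] := wkp_round_spec C R; have [C2 kE] := IH C1.
split => //; apply: leq_trans (leq_mul lt (leqnn _)).
by rewrite mulSn leq_add.
Qed.

Lemma wkp_round_or_final D c : consistent adj D c ->
  (exists c1 k, wkp_round adj c c1 k) \/ (exists k, wkp_final adj c k).
Proof.
move=> C; have [l L] := var_list_exists c; have [Vl _ _] := L.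
have [[c1|] [k P]] := process_exists C Vl.
  by left; exists c1, (size l + k), l => //; exists k.
by right; exists (size l + k), l => //; exists k.
Qed.

Lemma wkp_run_exists D c : consistent adj D c -> exists c' k, wkp_run adj c c' k.
Proof.
move=> C; have [N] := ubnP #|var_edges c|; elim: N c C => // N IH c C lt.
have [[c1 [k R]]|[k F]] := wkp_round_or_final C; last first.
  by exists c, k, 0, k; split; [exact: ex_refl | exact: F |].
have [C1 lt1 _] := wkp_round_spec C R.
have [c' [_ [k1 [k2 [E F _]]]]] := IH c1 C1 (leq_trans lt1 lt).
by exists c', (k + k1 + k2), (k + k1), k2; split; [exact: ex_step R E | exact: F |].
Qed.

Lemma wkp_exec_consistent D c0 c k : consistent adj D c0 -> wkp_exec adj c0 c k ->
  consistent adj D c.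
Proof. by move=> C0 /(wkp_exec_spec C0) []. Qed.

Lemma wkp_exec_cost_le D c0 c k : consistent adj D c0 -> wkp_exec adj c0 c k ->
  k <= nedges adj * (nedges adj * vwalk_max.+1).
Proof.
move=> C0 /(wkp_exec_spec C0) [_ kle].
exact: leq_trans kle (leq_mul (card_var_edges c0) (leqnn _)).
Qed.

Lemma card_gt0_nedges : 0 < nedges adj -> 0 < #|T|.
Proof.
case/card_gt0P => _ /imsetP [q _ _].
by rewrite -cardsT; apply/card_gt0P; exists q.1; rewrite inE.
Qed.

End Configurations.

Lemma cubic_cost_bound (t n k1 k2 : nat) : (0 < n -> 0 < t) ->
  k1 <= n * (n * (t + t).+2) -> k2 <= n * (t + t).+2 -> k1 + k2 <= 8 * (t * n ^ 2).
Proof.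
case: n => [|n] t_gt0 k1le k2le; first by move: k1le k2le; rewrite !mul0n; lia.
by have := t_gt0 isT; nia.
Qed.

Theorem theorem1 :
  exists C : nat, forall (T : finType) (adj : rel T),
    symmetric adj -> irreflexive adj ->
    forall c0 : config T, consistent adj (maxdeg adj) c0 ->
    [/\ (forall c k, wkp_exec adj c0 c k ->
           k <= C * (#|T| * nedges adj ^ 2)),
        (forall c k, wkp_exec adj c0 c k -> exists c' k', wkp_run adj c c' k'),
        (forall c k, wkp_run adj c0 c k ->
           k <= C * (#|T| * nedges adj ^ 2))
      & (forall c k, wkp_run adj c0 c k ->
           proper_coloring adj (maxdeg adj) c \/ canonical adj (maxdeg adj) c)].
Proof.
exists 8 => T adj symA irrA c0 C0.
have T_gt0 := card_gt0_nedges (adj := adj).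
split=> [c k E | c k E | c k [k1 [k2 [E F ->]]] | c k [k1 [k2 [E F _]]]];
  have C := wkp_exec_consistent symA irrA C0 E; have kE := wkp_exec_cost_le symA irrA C0 E.
- by rewrite -[k]addn0; apply: cubic_cost_bound kE _.
- exact: (wkp_run_exists symA irrA C).
- exact: cubic_cost_bound T_gt0 kE (wkp_final_cost_le symA irrA C F).
- by right; exact: (wkp_final_canonical symA C F).
Qed.
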